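(* Assume (H1) and that $\alpha$ is symmetric, and let $Q$ be a function on the interior $\mathcal{D}^\circ$ of $\mathcal{D}$ with $\nabla Q=q$. Let $F(s)=|\nabla Q(s)|^2-\Delta Q(s)$. Then (i) there is a constant $C\in\mathbb{R}$ with $F(s)\ge C$ for all $s\in\mathcal{D}^\circ$; (ii) $\inf\{F(s): s\in\mathcal{D}^\circ,\ |s|\ge R\}\to+\infty$ as $R\to\infty$.
   Context: $\gamma>0$, $\beta_i,\delta_i\in\mathbb{R}$, $\alpha_{ij}\in\mathbb{R}$; (H1): $\sum_{i,j}\alpha_{ij}z_iz_j>0$ for all $z\in(\mathbb{R}_+)^3\setminus\{0\}$. For $n\ge0$, $x\in[0,1]$: $U(n,x)=\beta_1-\delta_1-n(\alpha_{11}x^2+2\alpha_{21}x(1-x)+\alpha_{31}(1-x)^2)$, $V(n,x)=\beta_2-\delta_2-n(\alpha_{12}x^2+2\alpha_{22}x(1-x)+\alpha_{32}(1-x)^2)$, $W(n,x)=\beta_3-\delta_3-n(\alpha_{13}x^2+2\alpha_{23}x(1-x)+\alpha_{33}(1-x)^2)$. Generator on $(n,x)\in(0,\infty)\times(0,1)$: $\mathcal{L}f=b_N\partial_nf+b_X\partial_xf+\gamma n\,\partial^2_{nn}f+\frac{\gamma x(1-x)}{2n}\partial^2_{xx}f$, with $b_N(n,x)=n[x^2U+2x(1-x)V+(1-x)^2W]$ and $b_X(n,x)=(1-x)x^2(U-V)+x(1-x)^2(V-W)$. $u=\tan(\pi/\sqrt2)$, $\mathcal{D}=\{(s_1,s_2):s_2\ge0,\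 s_2\ge us_1\}$. $\psi(n,x)=\sqrt{2n/\gamma}\,(\cos\frac{\arccos(2x-1)}{\sqrt2},\sin\frac{\arccos(2x-1)}{\sqrt2})$, a bijection $(0,\infty)\times[0,1]\to\mathcal{D}\setminus\{(0,0)\}$. For $s\in\mathcal{D}^\circ$, $q(s):=-(\mathcal{L}\psi)(\psi^{-1}(s))$ (componentwise); when $\alpha$ is symmetric $q$ is a gradient field on $\mathcal{D}^\circ$ (e.g. in the neutral case $Q(s)=\ln|s|+\frac12\ln\sin(\sqrt2\theta(s))-(\beta-\delta-\frac{\alpha\gamma}{4}|s|^2)\frac{|s|^2}{4}$, $\theta(s)$ the polar angle). *)

From Stdlib Require Import Reals Lra ClassicalEpsilon.
Open Scope R_scope.

(* Derivative of a one-variable function at a point, as a total function: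
   the (unique) l with derivable_pt_lim f x l when it exists, an
   unspecified real otherwise. *)
Definition derive1 (f : R -> R) (x : R) : R :=
  epsilon (inhabits 0) (fun l => derivable_pt_lim f x l).

Definition d1 (g : R -> R -> R) (a b : R) : R := derive1 (fun t => g t b) a.
Definition d2 (g : R -> R -> R) (a b : R) : R := derive1 (fun t => g a t) b.

Definition H1 (alpha : nat -> nat -> R) : Prop :=
  forall z1 z2 z3 : R, 0 <= z1 -> 0 <= z2 -> 0 <= z3 ->
    ~ (z1 = 0 /\ z2 = 0 /\ z3 = 0) ->
    0 < alpha 1%nat 1%nat * z1 * z1 + alpha 1%nat 2%nat * z1 * z2 + alpha 1%nat 3%nat * z1 * z3
      + alpha 2%nat 1%nat * z2 * z1 + alpha 2%nat 2%nat * z2 * z2 + alpha 2%nat 3%nat * z2 * z3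
      + alpha 3%nat 1%nat * z3 * z1 + alpha 3%nat 2%nat * z3 * z2 + alpha 3%nat 3%nat * z3 * z3.

Definition alpha_symmetric (alpha : nat -> nat -> R) : Prop :=
  forall i j : nat, alpha i j = alpha j i.

Section Model.
Variables (gamma : R) (beta delta : nat -> R) (alpha : nat -> nat -> R).

Definition Uf (n x : R) : R :=
  beta 1%nat - delta 1%nat
  - n * (alpha 1%nat 1%nat * x ^ 2 + 2 * alpha 2%nat 1%nat * x * (1 - x)
         + alpha 3%nat 1%nat * (1 - x) ^ 2).
Definition Vf (n x : R) : R :=
  beta 2%nat - delta 2%nat
  - n * (alpha 1%nat 2%nat * x ^ 2 + 2 * alpha 2%nat 2%nat * x * (1 - x)
         + alpha 3%nat 2%nat * (1 - x) ^ 2).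
Definition Wf (n x : R) : R :=
  beta 3%nat - delta 3%nat
  - n * (alpha 1%nat 3%nat * x ^ 2 + 2 * alpha 2%nat 3%nat * x * (1 - x)
         + alpha 3%nat 3%nat * (1 - x) ^ 2).

Definition bN (n x : R) : R :=
  n * (x ^ 2 * Uf n x + 2 * x * (1 - x) * Vf n x + (1 - x) ^ 2 * Wf n x).
Definition bX (n x : R) : R :=
  (1 - x) * x ^ 2 * (Uf n x - Vf n x) + x * (1 - x) ^ 2 * (Vf n x - Wf n x).

Definition gen (f : R -> R -> R) (n x : R) : R :=
  bN n x * d1 f n x + bX n x * d2 f n x
  + gamma * n * d1 (d1 f) n x
  + gamma * x * (1 - x) / (2 * n) * d2 (d2 f) n x.

Definition psi1 (n x : R) : R :=
  sqrt (2 * n / gamma) * cos (acos (2 * x - 1) / sqrt 2).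
Definition psi2 (n x : R) : R :=
  sqrt (2 * n / gamma) * sin (acos (2 * x - 1) / sqrt 2).

Definition psi_inv (s : R * R) : R * R :=
  epsilon (inhabits (0, 0)) (fun p : R * R =>
    0 < fst p /\ 0 <= snd p <= 1 /\
    psi1 (fst p) (snd p) = fst s /\ psi2 (fst p) (snd p) = snd s).

Definition q1 (s1 s2 : R) : R :=
  let p := psi_inv (s1, s2) in - gen psi1 (fst p) (snd p).
Definition q2 (s1 s2 : R) : R :=
  let p := psi_inv (s1, s2) in - gen psi2 (fst p) (snd p).

End Model.

Definition u_slope : R := tan (PI / sqrt 2).

(* interior of D = {s2 >= 0, s2 >= u s1} *)
Definition D_int (s1 s2 : R) : Prop := 0 < s2 /\ u_slope * s1 < s2.

Definition Ffun (Q : R -> R -> R) (s1 s2 : R) : R :=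
  (d1 Q s1 s2) ^ 2 + (d2 Q s1 s2) ^ 2 - (d1 (d1 Q) s1 s2 + d2 (d2 Q) s1 s2).

(* In the coordinates s = psi(n,x) the field q has an explicit polar form
   q = a s + b J s (J the rotation by pi/2), whose coefficients are read off the
   drift of the generator: with rho = |s|^2 = 2n/gamma and c = cos(phase) = 2x-1,
   a = 1/rho - B(x)/2 + gamma rho A(x)/4, where B is the mean net growth rate and
   A(x) > 0 the competition form of alpha at (x^2, 2x(1-x), (1-x)^2).  Hence
   F = |q|^2 - div q is an explicit function of (rho, phase); completing squares,
   F >= rho (B - gamma rho A/2)^2/4 - O(rho), and since A is bounded below on [0,1]
   by (H1), F >= c3 rho^3 - c1 rho - c0 with c3 > 0.  Both claims follow from
   elementary facts about such cubics. *)

From Stdlib Require Import Reals Lra Psatz ClassicalEpsilon.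
From Coquelicot Require Import Coquelicot.
Open Scope R_scope.

Lemma derive1_is_derive f x l : is_derive f x l -> derive1 f x = l.
Proof.
  intro Hd. apply is_derive_Reals in Hd. unfold derive1.
  apply (uniqueness_limite f x); [|exact Hd].
  exact (epsilon_spec (inhabits 0) (fun l => derivable_pt_lim f x l) (ex_intro _ l Hd)).
Qed.

Lemma derive1_locally f h x l :
  locally x (fun t => h t = f t) -> is_derive h x l -> derive1 f x = l.
Proof. intros Hloc Hd. apply derive1_is_derive. exact (is_derive_ext_loc h f x l Hloc Hd). Qed.

Lemma locally_interval x a (P : R -> Prop) :
  0 < a -> (forall t, Rabs (t - x) < a -> P t) -> locally x P.
Proof. intros Ha HP. exists (mkposreal a Ha). intros t Ht. exact (HP t Ht). Qed.

Lemma locally_pos n (P : R -> Prop) : 0 < n -> (forall t, 0 < t -> P t) -> locally n P.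
Proof.
  intros Hn HP. apply (locally_interval n n); auto.
  intros t Ht. apply HP. apply Rabs_def2 in Ht. lra.
Qed.

Lemma locally_unit x (P : R -> Prop) : 0 < x < 1 -> (forall t, 0 < t < 1 -> P t) -> locally x P.
Proof.
  intros Hx HP. apply (locally_interval x (Rmin x (1 - x))).
  - apply Rmin_glb_lt; lra.
  - intros t Ht. apply HP. apply Rabs_def2 in Ht.
    pose proof (Rmin_l x (1 - x)). pose proof (Rmin_r x (1 - x)). lra.
Qed.

(* Replace the [Derive] of a function by its known value, given [is_derive]
   (the [Derive] terms produced by [auto_derive] are eta-expanded). *)
Ltac derive_subst H :=
  match type of H with is_derive _ _ ?l =>
    match goal with |- context [Derive ?f ?p] =>
      replace (Derive f p) with l by (symmetry; apply is_derive_unique; exact H) end end.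

Lemma is_derive_acos y : -1 < y < 1 -> is_derive acos y (-1 / sqrt (1 - y²)).
Proof.
  intros Hy. apply is_derive_Reals. rewrite <- (derive_pt_acos y Hy).
  apply (derive_pt_eq_1 _ _ _ (derivable_pt_acos y Hy)). reflexivity.
Qed.

Lemma sqrt2_bounds : 1 < sqrt 2 < 2.
Proof.
  split.
  - rewrite <- sqrt_1. apply sqrt_lt_1; lra.
  - replace 2 with (sqrt 4) at 2. apply sqrt_lt_1; lra.
    replace 4 with (2 * 2) by ring. rewrite sqrt_square; lra.
Qed.

Lemma sqrt2_sq : sqrt 2 ^ 2 = 2.
Proof. rewrite pow2_sqrt; lra. Qed.

(* The map psi in separated form: psi(n,x) = rad n * (cos, sin)(ang x), with
   radius [rad] and angle [ang]; [wx x = sin (acos (2x-1))], [dang], [ddang]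
   are the first two derivatives of the angle. *)
Definition rad g n := sqrt (2 * n / g).
Definition ang x := acos (2 * x - 1) / sqrt 2.
Definition wx x := sqrt (1 - (2 * x - 1)²).
Definition dang x := -2 / (sqrt 2 * wx x).
Definition ddang x := -4 * (2 * x - 1) / (sqrt 2 * wx x ^ 3).

Lemma rad_pos g n : 0 < g -> 0 < n -> 0 < rad g n.
Proof. intros; unfold rad; apply sqrt_lt_R0, Rdiv_lt_0_compat; lra. Qed.

Lemma rad_sq g n : 0 < g -> 0 < n -> n = g * rad g n ^ 2 / 2.
Proof.
  intros Hg Hn. unfold rad. rewrite pow2_sqrt. field. lra.
  apply Rlt_le, Rdiv_lt_0_compat; lra.
Qed.

Lemma wx_pos x : 0 < x < 1 -> 0 < wx x.
Proof. intros; unfold wx; apply sqrt_lt_R0. unfold Rsqr; nra. Qed.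

Lemma wx_sq x : 0 < x < 1 -> wx x ^ 2 = 4 * x * (1 - x).
Proof. intros. unfold wx. rewrite pow2_sqrt; unfold Rsqr; nra. Qed.

Lemma dang_sq x : 0 < x < 1 -> dang x ^ 2 = 1 / (2 * x * (1 - x)).
Proof.
  intros Hx. pose proof (wx_pos x Hx). pose proof sqrt2_bounds.
  unfold dang. replace ((-2 / (sqrt 2 * wx x)) ^ 2) with (4 / (sqrt 2 ^ 2 * wx x ^ 2))
    by (field; lra).
  rewrite wx_sq, sqrt2_sq by auto. field. split; nra.
Qed.

Lemma ddang_eq x : 0 < x < 1 ->
  ddang x = - (2 * x - 1) / (sqrt 2 * wx x * (x * (1 - x))).
Proof.
  intros Hx. pose proof (wx_pos x Hx). pose proof sqrt2_bounds.
  unfold ddang. replace (wx x ^ 3) with (wx x * wx x ^ 2) by ring.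
  rewrite wx_sq by auto. field. split; [nra|split; [nra|lra]].
Qed.

Lemma is_derive_acos_affine x : 0 < x < 1 ->
  is_derive (fun t => acos (2 * t - 1)) x (-2 / wx x).
Proof.
  intros Hx.
  assert (HA : is_derive acos (2 * x - 1) (-1 / wx x)) by (apply is_derive_acos; lra).
  assert (HL : is_derive (fun t => 2 * t - 1) x 2) by (auto_derive; auto; ring).
  pose proof (is_derive_comp acos (fun t => 2 * t - 1) x _ _ HA HL) as H.
  replace (-2 / wx x) with (scal 2 (-1 / wx x)); auto.
  unfold scal; simpl; unfold mult; simpl. unfold Rdiv. ring.
Qed.

Lemma is_derive_ang x : 0 < x < 1 -> is_derive ang x (dang x).
Proof.
  intros Hx. pose proof sqrt2_bounds. pose proof (wx_pos x Hx).
  unfold ang, dang. replace (-2 / (sqrt 2 * wx x)) with (/ sqrt 2 * (-2 / wx x))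
    by (field; lra).
  apply (is_derive_ext (fun t => / sqrt 2 * acos (2 * t - 1))).
  - intro t. exact (Rmult_comm _ _).
  - apply is_derive_scal, is_derive_acos_affine, Hx.
Qed.

Lemma is_derive_dang x : 0 < x < 1 -> is_derive dang x (ddang x).
Proof.
  intros Hx. pose proof (wx_pos x Hx) as Hw. pose proof sqrt2_bounds.
  unfold dang, ddang, wx, Rsqr in *. auto_derive.
  - split; [nra|split; [|auto]]. unfold Rminus in *. nra.
  - unfold Rminus, Rdiv in *. field. nra.
Qed.

Lemma is_derive_rad g n : 0 < g -> 0 < n -> is_derive (rad g) n (1 / (g * rad g n)).
Proof.
  intros Hg Hn. pose proof (rad_pos g n Hg Hn). unfold rad in *. auto_derive.
  - apply Rdiv_lt_0_compat; lra.
  - unfold Rdiv in *. field. lra.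
Qed.

Lemma is_derive_inv_rad g c n : 0 < g -> 0 < n ->
  is_derive (fun t => c / (g * rad g t)) n (- c / (g ^ 2 * rad g n ^ 3)).
Proof.
  intros Hg Hn. pose proof (rad_pos g n Hg Hn). unfold rad in *. auto_derive.
  - assert (0 < 2 * n / g) by (apply Rdiv_lt_0_compat; lra). nra.
  - unfold Rdiv in *. field. lra.
Qed.

Definition separated g (h : R -> R) n x := rad g n * h (ang x).

Lemma psi1_separated g : psi1 g = separated g cos.
Proof. reflexivity. Qed.

Lemma psi2_separated g : psi2 g = separated g sin.
Proof. reflexivity. Qed.

Section SeparatedDerivatives.
Variables (g : R) (h dh : R -> R).
Hypothesis Hg : 0 < g.
Hypotheses (Hh : forall y, is_derive h y (dh y)) (Hdh : forall y, is_derive dh y (- h y)).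

Lemma is_derive_separated_n n x : 0 < n ->
  is_derive (fun t => separated g h t x) n (h (ang x) / (g * rad g n)).
Proof.
  intros Hn. unfold separated. replace (h (ang x) / (g * rad g n))
    with (h (ang x) * (1 / (g * rad g n))) by (unfold Rdiv; ring).
  apply (is_derive_ext (fun t => h (ang x) * rad g t)); [intro t; exact (Rmult_comm _ _)|].
  apply is_derive_scal, is_derive_rad; auto.
Qed.

Lemma is_derive_separated_x n x : 0 < x < 1 ->
  is_derive (fun t => separated g h n t) x (rad g n * dh (ang x) * dang x).
Proof.
  intros Hx. unfold separated. rewrite Rmult_assoc. apply is_derive_scal.
  rewrite Rmult_comm. exact (is_derive_comp h ang x _ _ (Hh (ang x)) (is_derive_ang x Hx)).
Qed.

Lemma d1_separated n x : 0 < n -> d1 (separated g h) n x = h (ang x) / (g * rad g n).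
Proof. intros Hn. apply derive1_is_derive, is_derive_separated_n, Hn. Qed.

Lemma d2_separated n x : 0 < x < 1 -> d2 (separated g h) n x = rad g n * dh (ang x) * dang x.
Proof. intros Hx. apply derive1_is_derive, is_derive_separated_x, Hx. Qed.

Lemma d11_separated n x : 0 < n ->
  d1 (d1 (separated g h)) n x = - h (ang x) / (g ^ 2 * rad g n ^ 3).
Proof.
  intros Hn. unfold d1 at 1. eapply derive1_locally; [|apply is_derive_inv_rad; auto].
  apply locally_pos; auto. intros t Ht. symmetry. apply d1_separated, Ht.
Qed.

Lemma d22_separated n x : 0 < x < 1 -> d2 (d2 (separated g h)) n x =
  rad g n * (- h (ang x) * dang x ^ 2 + dh (ang x) * ddang x).
Proof.
  intros Hx. unfold d2 at 1.
  eapply derive1_locally with (h := fun t => rad g n * dh (ang t) * dang t).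
  { apply locally_unit; auto. intros t Ht. symmetry. apply d2_separated, Ht. }
  pose proof (is_derive_ang x Hx) as HA. pose proof (is_derive_dang x Hx) as HdA.
  pose proof (Hdh (ang x)) as HH.
  auto_derive.
  - repeat split; eexists; eauto.
  - derive_subst HA. derive_subst HdA. derive_subst HH. ring.
Qed.
End SeparatedDerivatives.

Section Drift.
Variables (beta delta : nat -> R) (alpha : nat -> nat -> R).

Definition net i := beta i - delta i.
Definition comp i x :=
  alpha 1%nat i * x ^ 2 + 2 * alpha 2%nat i * x * (1 - x) + alpha 3%nat i * (1 - x) ^ 2.
Definition netgrowth x :=
  x ^ 2 * net 1%nat + 2 * x * (1 - x) * net 2%nat + (1 - x) ^ 2 * net 3%nat.
Definition competition x :=
  x ^ 2 * comp 1%nat x + 2 * x * (1 - x) * comp 2%nat x + (1 - x) ^ 2 * comp 3%nat x.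
Definition selgrowth x := x * (net 1%nat - net 2%nat) + (1 - x) * (net 2%nat - net 3%nat).
Definition selcomp x :=
  x * (comp 1%nat x - comp 2%nat x) + (1 - x) * (comp 2%nat x - comp 3%nat x).

Lemma bN_eq n x : bN beta delta alpha n x = n * (netgrowth x - n * competition x).
Proof. unfold bN, Uf, Vf, Wf, netgrowth, competition, net, comp. ring. Qed.

Lemma bX_eq n x : bX beta delta alpha n x = x * (1 - x) * (selgrowth x - n * selcomp x).
Proof. unfold bX, Uf, Vf, Wf, selgrowth, selcomp, net, comp. ring. Qed.

Definition dcomp i x :=
  2 * alpha 1%nat i * x + 2 * alpha 2%nat i * (1 - 2 * x) - 2 * alpha 3%nat i * (1 - x).
Definition dselgrowth := net 1%nat - 2 * net 2%nat + net 3%nat.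
Definition dselcomp x :=
  (comp 1%nat x - comp 2%nat x) + x * (dcomp 1%nat x - dcomp 2%nat x)
  - (comp 2%nat x - comp 3%nat x) + (1 - x) * (dcomp 2%nat x - dcomp 3%nat x).

Lemma ex_derive_netgrowth x : ex_derive netgrowth x.
Proof. unfold netgrowth. auto_derive. auto. Qed.

Lemma ex_derive_competition x : ex_derive competition x.
Proof. unfold competition, comp. auto_derive. auto. Qed.

Lemma is_derive_selgrowth x : is_derive selgrowth x dselgrowth.
Proof. unfold selgrowth, dselgrowth. auto_derive; [auto|ring]. Qed.

Lemma is_derive_selcomp x : is_derive selcomp x (dselcomp x).
Proof. unfold selcomp, dselcomp, dcomp, comp. auto_derive; [auto|ring]. Qed.

Lemma ex_derive_dselcomp x : ex_derive dselcomp x.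
Proof. unfold dselcomp, dcomp, comp. auto_derive. auto. Qed.

(* In the coordinates s = psi(n,x), with rho = |s|^2 = 2n/gamma, c = cos(sqrt2 theta)
   = 2x-1 and S = sin(sqrt2 theta), the field q is q = a s + b J s, where J is
   the rotation by pi/2 and a, b are the following coefficients. *)
Definition radial_coef g rho c :=
  1 / rho - netgrowth ((1 + c) / 2) / 2 + g * rho * competition ((1 + c) / 2) / 4.
Definition angular_coef g rho c S :=
  S * (selgrowth ((1 + c) / 2) - g * rho / 2 * selcomp ((1 + c) / 2)) / (2 * sqrt 2)
  + c / (sqrt 2 * rho * S).

Lemma gen_separated g (h dh : R -> R) n x : 0 < g -> 0 < n -> 0 < x < 1 ->
  (forall y, is_derive h y (dh y)) -> (forall y, is_derive dh y (- h y)) ->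
  gen g beta delta alpha (separated g h) n x =
  - (radial_coef g (rad g n ^ 2) (2 * x - 1) * (rad g n * h (ang x))
     + angular_coef g (rad g n ^ 2) (2 * x - 1) (wx x) * (rad g n * dh (ang x))).
Proof.
  intros Hg Hn Hx Hh Hdh. unfold gen.
  rewrite (d1_separated g h), (d2_separated g h dh), (d11_separated g h),
    (d22_separated g h dh) by auto.
  rewrite bN_eq, bX_eq.
  assert (Ew : x * (1 - x) = wx x ^ 2 / 4) by (rewrite wx_sq; auto; field).
  rewrite Ew, dang_sq, ddang_eq by auto. unfold radial_coef, angular_coef.
  replace ((1 + (2 * x - 1)) / 2) with x by field.
  pose proof (rad_pos g n Hg Hn). pose proof (wx_pos x Hx). pose proof sqrt2_bounds.
  pose proof (rad_sq g n Hg Hn) as En.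
  set (r := rad g n) in *. clearbody r. subst n.
  unfold dang. field. repeat split; nra.
Qed.
End Drift.

Lemma ang_bound x : 0 <= ang x <= PI.
Proof.
  pose proof (acos_bound (2 * x - 1)). pose proof sqrt2_bounds. unfold ang. split.
  - apply Rdiv_le_0_compat; lra.
  - apply Rmult_le_reg_r with (sqrt 2); [lra|].
    replace (acos (2 * x - 1) / sqrt 2 * sqrt 2) with (acos (2 * x - 1)) by (field; lra). nra.
Qed.

Lemma psi_norm g n x : 0 < g -> 0 < n -> psi1 g n x ^ 2 + psi2 g n x ^ 2 = 2 * n / g.
Proof.
  intros Hg Hn. rewrite psi1_separated, psi2_separated. unfold separated.
  pose proof (sin2_cos2 (ang x)) as Hsc. unfold Rsqr in Hsc.
  replace ((rad g n * cos (ang x)) ^ 2 + (rad g n * sin (ang x)) ^ 2)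
    with (rad g n ^ 2 * (sin (ang x) * sin (ang x) + cos (ang x) * cos (ang x))) by ring.
  rewrite Hsc. unfold rad. rewrite pow2_sqrt; [ring|]. apply Rlt_le, Rdiv_lt_0_compat; lra.
Qed.

Lemma psi_injective g n x n' x' : 0 < g -> 0 < n -> 0 < n' -> 0 <= x <= 1 -> 0 <= x' <= 1 ->
  psi1 g n x = psi1 g n' x' -> psi2 g n x = psi2 g n' x' -> n = n' /\ x = x'.
Proof.
  intros Hg Hn Hn' Hx Hx' E1 E2.
  assert (En : n = n').
  { pose proof (psi_norm g n x Hg Hn). pose proof (psi_norm g n' x' Hg Hn').
    rewrite E1, E2 in *. assert (Eq : 2 * n * / g = 2 * n' * / g) by (unfold Rdiv in *; lra).
    apply Rmult_eq_reg_r in Eq; [lra|apply Rinv_neq_0_compat; lra]. }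
  subst n'. split; [reflexivity|].
  rewrite psi1_separated in E1. unfold separated in E1.
  apply Rmult_eq_reg_l in E1; [|apply Rgt_not_eq, rad_pos; auto].
  assert (Eang : ang x = ang x').
  { rewrite <- (acos_cos (ang x)), <- (acos_cos (ang x')) by apply ang_bound.
    now rewrite E1. }
  assert (Eacos : acos (2 * x - 1) = acos (2 * x' - 1)).
  { unfold ang in Eang. pose proof sqrt2_bounds.
    apply Rmult_eq_reg_r with (/ sqrt 2); [exact Eang|].
    apply Rinv_neq_0_compat; lra. }
  assert (2 * x - 1 = 2 * x' - 1) by
    (rewrite <- (cos_acos (2 * x - 1)), <- (cos_acos (2 * x' - 1)), Eacos by lra; reflexivity).
  lra.
Qed.

Definition rho s1 s2 := s1 ^ 2 + s2 ^ 2.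
Definition theta s1 s2 := acos (s1 / sqrt (rho s1 s2)).
Definition phase s1 s2 := sqrt 2 * theta s1 s2.

Section PolarCoordinates.
Variables s1 s2 : R.
Hypothesis HD : D_int s1 s2.

Lemma rho_pos : 0 < rho s1 s2.
Proof. destruct HD. unfold rho. nra. Qed.

Lemma sqrt_rho_pos : 0 < sqrt (rho s1 s2).
Proof. apply sqrt_lt_R0, rho_pos. Qed.

Lemma sqrt_rho_sq : sqrt (rho s1 s2) ^ 2 = rho s1 s2.
Proof. rewrite pow2_sqrt; [reflexivity|apply Rlt_le, rho_pos]. Qed.

Lemma cos_ratio_bound : -1 < s1 / sqrt (rho s1 s2) < 1.
Proof.
  pose proof sqrt_rho_pos. pose proof sqrt_rho_sq as Hr2. destruct HD.
  set (r := sqrt (rho s1 s2)) in *. unfold rho in Hr2.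
  assert (E : (s1 / r) ^ 2 = s1 ^ 2 / r ^ 2) by (field; lra).
  assert (s1 ^ 2 / r ^ 2 < 1).
  { apply Rmult_lt_reg_r with (r ^ 2); [nra|]. field_simplify; nra. }
  nra.
Qed.

Lemma cos_theta : cos (theta s1 s2) = s1 / sqrt (rho s1 s2).
Proof. unfold theta. apply cos_acos. pose proof cos_ratio_bound. lra. Qed.

Lemma theta_bound : 0 < theta s1 s2 < PI.
Proof. unfold theta. apply acos_bound_lt, cos_ratio_bound. Qed.

Lemma sin_theta : sin (theta s1 s2) = s2 / sqrt (rho s1 s2).
Proof.
  unfold theta. rewrite sin_acos by (pose proof cos_ratio_bound; lra).
  pose proof sqrt_rho_pos. pose proof sqrt_rho_sq as Hr2. destruct HD as [Hs2 _].
  set (r := sqrt (rho s1 s2)) in *. unfold rho in Hr2.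
  assert (E : (s2 / r)² = 1 - (s1 / r)²) by (unfold Rsqr; field_simplify_eq; [nra|lra]).
  rewrite <- E.
  apply sqrt_Rsqr. apply Rlt_le, Rdiv_lt_0_compat; lra.
Qed.

(* The boundary ray s2 = u s1 (s1 < 0) has polar angle pi/sqrt2. *)
Lemma theta_lt_wedge : theta s1 s2 < PI / sqrt 2.
Proof.
  pose proof sqrt2_bounds. pose proof PI_RGT_0.
  assert (HT : PI / 2 < PI / sqrt 2 < PI).
  { split.
    - apply Rmult_lt_compat_l; [lra|]. apply Rinv_lt_contravar; nra.
    - apply Rlt_le_trans with (PI / 1); [|lra].
      apply Rmult_lt_compat_l; [lra|]. apply Rinv_lt_contravar; nra. }
  pose proof theta_bound. pose proof sqrt_rho_pos.
  pose proof cos_theta as Hc. pose proof sin_theta as Hs. destruct HD as [Hs2 Hu].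
  destruct (Rle_or_lt 0 s1) as [Hs1|Hs1].
  - destruct (Rle_or_lt (theta s1 s2) (PI / 2)); [lra|].
    assert (cos (theta s1 s2) < 0) by (apply cos_lt_0; lra).
    assert (0 <= s1 / sqrt (rho s1 s2)) by (apply Rdiv_le_0_compat; lra). lra.
  - destruct (Rlt_or_le (theta s1 s2) (PI / sqrt 2)) as [|Hge]; [assumption|exfalso].
    set (T := PI / sqrt 2) in *.
    assert (cT : cos T < 0) by (apply cos_lt_0; lra).
    assert (Hdiff : 0 <= sin (theta s1 s2 - T)) by (apply sin_ge_0; lra).
    rewrite sin_minus in Hdiff.
    unfold u_slope, tan in Hu. fold T in Hu.
    assert (s2 * cos T < sin T * s1).
    { assert (X := Rmult_lt_compat_r (- cos T) _ _ ltac:(lra) Hu).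
      replace (sin T / cos T * s1 * - cos T) with (- (sin T * s1)) in X by (field; lra). lra. }
    assert (sin (theta s1 s2) * cos T < sin T * cos (theta s1 s2)).
    { rewrite Hc, Hs. apply Rmult_lt_reg_r with (sqrt (rho s1 s2)); auto.
      field_simplify; lra. }
    lra.
Qed.

Lemma phase_bound : 0 < phase s1 s2 < PI.
Proof.
  pose proof theta_lt_wedge. pose proof theta_bound. pose proof sqrt2_bounds.
  unfold phase. split; [nra|].
  apply Rmult_lt_reg_r with (/ sqrt 2); [apply Rinv_0_lt_compat; lra|].
  replace (sqrt 2 * theta s1 s2 * / sqrt 2) with (theta s1 s2) by (field; lra). assumption.
Qed.

Lemma sin_phase_pos : 0 < sin (phase s1 s2).
Proof. apply sin_gt_0; apply phase_bound. Qed.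

(* The x-coordinate of the preimage of s: x = (1 + cos phase) / 2. *)
Lemma preimage_x_bound : 0 < (1 + cos (phase s1 s2)) / 2 < 1.
Proof.
  pose proof sin_phase_pos. pose proof (sin2_cos2 (phase s1 s2)) as Hsc.
  unfold Rsqr in Hsc. nra.
Qed.

Lemma ang_preimage : ang ((1 + cos (phase s1 s2)) / 2) = theta s1 s2.
Proof.
  pose proof phase_bound. pose proof sqrt2_bounds. unfold ang.
  replace (2 * ((1 + cos (phase s1 s2)) / 2) - 1) with (cos (phase s1 s2)) by field.
  rewrite acos_cos by lra. unfold phase. field. lra.
Qed.

Lemma wx_preimage : wx ((1 + cos (phase s1 s2)) / 2) = sin (phase s1 s2).
Proof.
  pose proof sin_phase_pos. unfold wx.
  replace (2 * ((1 + cos (phase s1 s2)) / 2) - 1) with (cos (phase s1 s2)) by field.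
  rewrite <- (sqrt_Rsqr (sin (phase s1 s2))) by lra. f_equal.
  pose proof (sin2_cos2 (phase s1 s2)). lra.
Qed.

Lemma psi_preimage g : 0 < g ->
  psi1 g (g * rho s1 s2 / 2) ((1 + cos (phase s1 s2)) / 2) = s1 /\
  psi2 g (g * rho s1 s2 / 2) ((1 + cos (phase s1 s2)) / 2) = s2.
Proof.
  intros Hg. pose proof sqrt_rho_pos. pose proof rho_pos. pose proof phase_bound.
  rewrite psi1_separated, psi2_separated. unfold separated.
  rewrite ang_preimage, cos_theta, sin_theta.
  unfold rad. replace (2 * (g * rho s1 s2 / 2) / g) with (rho s1 s2) by (field; lra).
  split; field; lra.
Qed.

Lemma psi_inv_eq g : 0 < g ->
  psi_inv g (s1, s2) = (g * rho s1 s2 / 2, (1 + cos (phase s1 s2)) / 2).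
Proof.
  intros Hg. pose proof rho_pos. pose proof preimage_x_bound.
  destruct (psi_preimage g Hg) as [P1 P2].
  unfold psi_inv.
  destruct (epsilon_spec (inhabits (0, 0)) (fun p : R * R =>
    0 < fst p /\ 0 <= snd p <= 1 /\
    psi1 g (fst p) (snd p) = fst (s1, s2) /\ psi2 g (fst p) (snd p) = snd (s1, s2)))
    as (Hn & Hx & E1 & E2).
  { exists (g * rho s1 s2 / 2, (1 + cos (phase s1 s2)) / 2). simpl.
    split; [apply Rdiv_lt_0_compat; nra|]. split; [lra|]. exact (conj P1 P2). }
  set (p := epsilon _ _) in *. destruct p as [n x]. simpl in *.
  rewrite <- P1 in E1. rewrite <- P2 in E2.
  assert (Hn0 : 0 < g * rho s1 s2 / 2) by (apply Rdiv_lt_0_compat; nra).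
  assert (Hx0 : 0 <= (1 + cos (phase s1 s2)) / 2 <= 1) by lra.
  destruct (psi_injective g _ _ _ _ Hg Hn Hn0 Hx Hx0 E1 E2) as [-> ->]. reflexivity.
Qed.

End PolarCoordinates.

(* (-sin)' = -cos, so that cos and sin both satisfy h'' = -h. *)
Lemma is_derive_opp_sin y : is_derive (fun t => - sin t) y (- cos y).
Proof. auto_derive; [auto|ring]. Qed.

Definition acoef g beta delta alpha s1 s2 :=
  radial_coef beta delta alpha g (rho s1 s2) (cos (phase s1 s2)).
Definition bcoef g beta delta alpha s1 s2 :=
  angular_coef beta delta alpha g (rho s1 s2) (cos (phase s1 s2)) (sin (phase s1 s2)).

Lemma q_polar g beta delta alpha s1 s2 : 0 < g -> D_int s1 s2 ->
  q1 g beta delta alpha s1 s2 =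
    acoef g beta delta alpha s1 s2 * s1 - bcoef g beta delta alpha s1 s2 * s2 /\
  q2 g beta delta alpha s1 s2 =
    acoef g beta delta alpha s1 s2 * s2 + bcoef g beta delta alpha s1 s2 * s1.
Proof.
  intros Hg HD.
  pose proof (sqrt_rho_pos s1 s2 HD). pose proof (rho_pos s1 s2 HD).
  pose proof (preimage_x_bound s1 s2 HD) as Hx.
  assert (Hn : 0 < g * rho s1 s2 / 2) by (apply Rdiv_lt_0_compat; nra).
  assert (Er : rad g (g * rho s1 s2 / 2) = sqrt (rho s1 s2))
    by (unfold rad; f_equal; field; lra).
  assert (Ec : 2 * ((1 + cos (phase s1 s2)) / 2) - 1 = cos (phase s1 s2)) by field.
  unfold q1, q2. rewrite psi_inv_eq by auto. simpl.
  rewrite psi1_separated, psi2_separated.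
  rewrite (gen_separated _ _ _ g cos (fun t => - sin t)), (gen_separated _ _ _ g sin cos)
    by (auto using is_derive_cos, is_derive_sin, is_derive_opp_sin).
  rewrite Er, Ec, wx_preimage, ang_preimage, sqrt_rho_sq, cos_theta, sin_theta by auto.
  unfold acoef, bcoef. split; field; lra.
Qed.

Lemma is_derive_rho1 s1 s2 : is_derive (fun t => rho t s2) s1 (2 * s1).
Proof. unfold rho. auto_derive; [auto|ring]. Qed.

Lemma is_derive_rho2 s1 s2 : is_derive (fun t => rho s1 t) s2 (2 * s2).
Proof. unfold rho. auto_derive; [auto|ring]. Qed.

Lemma is_derive_acos_ratio s1 s2 : D_int s1 s2 ->
  is_derive acos (s1 / sqrt (rho s1 s2)) (-1 / (s2 / sqrt (rho s1 s2))).
Proof.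
  intros HD. rewrite <- (sin_theta s1 s2 HD). unfold theta.
  rewrite sin_acos by (pose proof (cos_ratio_bound s1 s2 HD); lra).
  apply is_derive_acos, cos_ratio_bound, HD.
Qed.

Lemma is_derive_phase1 s1 s2 : D_int s1 s2 ->
  is_derive (fun t => phase t s2) s1 (- sqrt 2 * s2 / rho s1 s2).
Proof.
  intros HD. pose proof (rho_pos s1 s2 HD). pose proof (sqrt_rho_pos s1 s2 HD).
  pose proof (sqrt_rho_sq s1 s2 HD) as Hr2.
  pose proof (is_derive_acos_ratio s1 s2 HD) as HA. pose proof (is_derive_rho1 s1 s2) as HR.
  destruct HD as [Hs2 _].
  unfold phase, theta. auto_derive.
  - repeat split; try (eexists; eassumption); lra.
  - derive_subst HR. derive_subst HA.
    assert (E : s1 ^ 2 = sqrt (rho s1 s2) ^ 2 - s2 ^ 2) by (rewrite Hr2; unfold rho; ring).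
    set (r := sqrt (rho s1 s2)) in *. clearbody r. rewrite <- Hr2.
    field_simplify; try lra. rewrite E. field. lra.
Qed.

Lemma is_derive_phase2 s1 s2 : D_int s1 s2 ->
  is_derive (fun t => phase s1 t) s2 (sqrt 2 * s1 / rho s1 s2).
Proof.
  intros HD. pose proof (rho_pos s1 s2 HD). pose proof (sqrt_rho_pos s1 s2 HD).
  pose proof (sqrt_rho_sq s1 s2 HD) as Hr2.
  pose proof (is_derive_acos_ratio s1 s2 HD) as HA. pose proof (is_derive_rho2 s1 s2) as HR.
  destruct HD as [Hs2 _].
  unfold phase, theta. auto_derive.
  - repeat split; try (eexists; eassumption); lra.
  - derive_subst HR. derive_subst HA.
    set (r := sqrt (rho s1 s2)) in *. clearbody r. rewrite <- Hr2. field. lra.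
Qed.

Lemma D_int_locally1 s1 s2 : D_int s1 s2 -> locally s1 (fun t => D_int t s2).
Proof.
  unfold D_int. intros [Hs2 Hu]. set (u := u_slope) in *.
  pose proof (Rabs_pos u).
  apply (locally_interval s1 ((s2 - u * s1) / (Rabs u + 1))).
  { apply Rdiv_lt_0_compat; lra. }
  intros t Ht. split; [assumption|].
  assert (u * (t - s1) <= Rabs u * Rabs (t - s1)) by (rewrite <- Rabs_mult; apply Rle_abs).
  assert (Rabs u * Rabs (t - s1) <= Rabs u * ((s2 - u * s1) / (Rabs u + 1)))
    by (apply Rmult_le_compat_l; lra).
  assert (Rabs u * ((s2 - u * s1) / (Rabs u + 1)) < s2 - u * s1)
    by (apply Rmult_lt_reg_r with (Rabs u + 1); [lra|]; field_simplify; nra).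
  lra.
Qed.

Lemma D_int_locally2 s1 s2 : D_int s1 s2 -> locally s2 (fun t => D_int s1 t).
Proof.
  unfold D_int. intros [Hs2 Hu].
  apply (locally_interval s2 (Rmin s2 (s2 - u_slope * s1))); [apply Rmin_glb_lt; lra|].
  intros t Ht. apply Rabs_def2 in Ht.
  pose proof (Rmin_l s2 (s2 - u_slope * s1)). pose proof (Rmin_r s2 (s2 - u_slope * s1)).
  split; lra.
Qed.

(* F = |q|^2 - div q in polar form (rho, c = cos phase, S = sin phase): with
   q = a s + b J s one has |q|^2 = rho (a^2 + b^2) and
   div q = 2 rho da/drho + 2 a + sqrt2 db/dphase. *)
Definition Fpolar beta delta alpha g rh c S :=
  let x := (1 + c) / 2 in
  let a := radial_coef beta delta alpha g rh c in
  let b := angular_coef beta delta alpha g rh c S in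
  let a_rho := -1 / rh ^ 2 + g * competition alpha x / 4 in
  let sel := selgrowth beta delta x - g * rh / 2 * selcomp alpha x in
  let dsel := dselgrowth beta delta - g * rh / 2 * dselcomp alpha x in
  let b_phase := (c * sel - S ^ 2 * dsel / 2) / 2 - (S ^ 2 + c ^ 2) / (rh * S ^ 2) in
  rh * (a ^ 2 + b ^ 2) - (2 * rh * a_rho + 2 * a + b_phase).

Section FPolarForm.
Variables (g : R) (beta delta : nat -> R) (alpha : nat -> nat -> R) (Q : R -> R -> R).
Hypothesis Hg : 0 < g.
Hypothesis HQ : forall s1 s2 : R, D_int s1 s2 ->
  derivable_pt_lim (fun t => Q t s2) s1 (q1 g beta delta alpha s1 s2) /\
  derivable_pt_lim (fun t => Q s1 t) s2 (q2 g beta delta alpha s1 s2).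

Let a := acoef g beta delta alpha.
Let b := bcoef g beta delta alpha.

Lemma d1Q_polar s1 s2 : D_int s1 s2 -> d1 Q s1 s2 = a s1 s2 * s1 - b s1 s2 * s2.
Proof.
  intros HD. unfold a, b. rewrite <- (proj1 (q_polar g beta delta alpha s1 s2 Hg HD)).
  apply derive1_is_derive, is_derive_Reals, HQ, HD.
Qed.

Lemma d2Q_polar s1 s2 : D_int s1 s2 -> d2 Q s1 s2 = a s1 s2 * s2 + b s1 s2 * s1.
Proof.
  intros HD. unfold a, b. rewrite <- (proj2 (q_polar g beta delta alpha s1 s2 Hg HD)).
  apply derive1_is_derive, is_derive_Reals, HQ, HD.
Qed.

Lemma F_polar s1 s2 : D_int s1 s2 ->
  Ffun Q s1 s2 = Fpolar beta delta alpha g (rho s1 s2) (cos (phase s1 s2)) (sin (phase s1 s2)).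
Proof.
  intros HD.
  pose proof (rho_pos s1 s2 HD). pose proof (sin_phase_pos s1 s2 HD). pose proof sqrt2_bounds.
  pose proof (is_derive_phase1 s1 s2 HD) as P1. pose proof (is_derive_rho1 s1 s2) as R1.
  pose proof (is_derive_phase2 s1 s2 HD) as P2. pose proof (is_derive_rho2 s1 s2) as R2.
  set (x := (1 + cos (phase s1 s2)) / 2).
  pose proof (ex_derive_netgrowth beta delta x). pose proof (ex_derive_competition alpha x).
  pose proof (is_derive_selgrowth beta delta x) as S0.
  pose proof (is_derive_selcomp alpha x) as S1.
  evar (l1 : R). assert (HE1 : is_derive (fun t => a t s2 * t - b t s2 * s2) s1 l1).
  { unfold a, b, acoef, bcoef, radial_coef, angular_coef. auto_derive.
    - repeat split; try (eexists; eassumption); auto; apply Rgt_not_eq;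
        repeat apply Rmult_lt_0_compat; lra.
    - subst l1; reflexivity. }
  evar (l2 : R). assert (HE2 : is_derive (fun t => a s1 t * t + b s1 t * s1) s2 l2).
  { unfold a, b, acoef, bcoef, radial_coef, angular_coef. auto_derive.
    - repeat split; try (eexists; eassumption); auto; apply Rgt_not_eq;
        repeat apply Rmult_lt_0_compat; lra.
    - subst l2; reflexivity. }
  assert (D11 : d1 (d1 Q) s1 s2 = l1).
  { unfold d1 at 1. eapply derive1_locally; [|exact HE1].
    generalize (D_int_locally1 s1 s2 HD). apply filter_imp. intros t Ht.
    symmetry. apply d1Q_polar, Ht. }
  assert (D22 : d2 (d2 Q) s1 s2 = l2).
  { unfold d2 at 1. eapply derive1_locally; [|exact HE2].
    generalize (D_int_locally2 s1 s2 HD). apply filter_imp. intros t Ht.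
    symmetry. apply d2Q_polar, Ht. }
  unfold Ffun. rewrite D11, D22, d1Q_polar, d2Q_polar by auto. subst l1 l2.
  repeat derive_subst P1. repeat derive_subst R1. repeat derive_subst P2.
  repeat derive_subst R2. repeat derive_subst S0. repeat derive_subst S1.
  unfold a, b, acoef, bcoef, Fpolar, radial_coef, angular_coef. unfold x, rho, Rdiv in *.
  field. lra.
Qed.
End FPolarForm.

(* Completing the squares in b and in a: the only negative contributions to
   F are -2 rho da/drho (up to its positive part 2/rho) and the x-derivative
   of the selection term. *)
Lemma Fpolar_lower beta delta alpha g rh c S : 0 < rh -> 0 < S ->
  let x := (1 + c) / 2 in
  rh * (netgrowth beta delta x - g * rh * competition alpha x / 2) ^ 2 / 4
  - g * rh * competition alpha x / 2
  + S ^ 2 * (dselgrowth beta delta - g * rh / 2 * dselcomp alpha x) / 4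
  <= Fpolar beta delta alpha g rh c S.
Proof.
  intros Hr HS x.
  set (sel := selgrowth beta delta x - g * rh / 2 * selcomp alpha x).
  set (X := S * sel / 2 + c / (rh * S)).
  assert (Eb : angular_coef beta delta alpha g rh c S ^ 2 = X ^ 2 / 2).
  { pose proof sqrt2_bounds. rewrite <- sqrt2_sq.
    unfold angular_coef, X, sel. fold x. field. lra. }
  unfold Fpolar. fold x sel. rewrite Eb.
  assert (0 < S ^ 2) by (apply pow_lt; lra).
  assert (0 < rh * S ^ 2) by (apply Rmult_lt_0_compat; lra).
  assert (0 <= rh * S ^ 2 * sel ^ 2 / 8) by (pose proof (pow2_ge_0 sel); unfold Rdiv; nra).
  assert (0 <= c ^ 2 / (2 * rh * S ^ 2)) by
    (apply Rdiv_le_0_compat; [apply pow2_ge_0|lra]).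
  assert (0 <= (S ^ 2 + c ^ 2) / (rh * S ^ 2)) by
    (apply Rdiv_le_0_compat; [pose proof (pow2_ge_0 c)|]; lra).
  assert (0 < 1 / rh) by (apply Rdiv_lt_0_compat; lra).
  match goal with |- ?L <= ?F => assert (E : F = L + (1 / rh + rh * S ^ 2 * sel ^ 2 / 8
      + c ^ 2 / (2 * rh * S ^ 2) + (S ^ 2 + c ^ 2) / (rh * S ^ 2))) end.
  { unfold X, sel, radial_coef. fold x. field. lra. }
  rewrite E. lra.
Qed.

Lemma continuity_of_ex_derive (f : R -> R) x : ex_derive f x -> continuity_pt f x.
Proof.
  intros [l Hl]. apply is_derive_Reals in Hl.
  apply derivable_continuous_pt. exists l. exact Hl.
Qed.

Lemma bounded_on_unit (f : R -> R) : (forall x, ex_derive f x) ->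
  exists K, forall x, 0 <= x <= 1 -> Rabs (f x) <= K.
Proof.
  intros Hf.
  assert (Hc : forall x, continuity_pt f x) by (intro x; apply continuity_of_ex_derive, Hf).
  destruct (continuity_ab_maj f 0 1 ltac:(lra) (fun x _ => Hc x)) as [M1 [HM1 _]].
  destruct (continuity_ab_min f 0 1 ltac:(lra) (fun x _ => Hc x)) as [M2 [HM2 _]].
  exists (Rabs (f M1) + Rabs (f M2)). intros x Hx.
  specialize (HM1 x Hx). specialize (HM2 x Hx).
  pose proof (Rle_abs (f M1)). pose proof (Rabs_pos (f M1)).
  pose proof (Rabs_pos (f M2)). pose proof (Rabs_maj2 (f M2)).
  apply Rabs_le. split; lra.
Qed.

(* Under (H1), the competition form is bounded below by a positive constant
   on [0,1]: it is the quadratic form of alpha at (x^2, 2x(1-x), (1-x)^2). *)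
Lemma competition_pos alpha x : H1 alpha -> 0 <= x <= 1 -> 0 < competition alpha x.
Proof.
  intros HH1 Hx.
  replace (competition alpha x) with
    (alpha 1%nat 1%nat * (x^2) * (x^2) + alpha 1%nat 2%nat * (x^2) * (2*x*(1-x))
     + alpha 1%nat 3%nat * (x^2) * ((1-x)^2) + alpha 2%nat 1%nat * (2*x*(1-x)) * (x^2)
     + alpha 2%nat 2%nat * (2*x*(1-x)) * (2*x*(1-x)) + alpha 2%nat 3%nat * (2*x*(1-x)) * ((1-x)^2)
     + alpha 3%nat 1%nat * ((1-x)^2) * (x^2) + alpha 3%nat 2%nat * ((1-x)^2) * (2*x*(1-x))
     + alpha 3%nat 3%nat * ((1-x)^2) * ((1-x)^2)) by (unfold competition, comp; ring).
  apply HH1; nra.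
Qed.

Lemma competition_min alpha : H1 alpha ->
  exists a0, 0 < a0 /\ forall x, 0 <= x <= 1 -> a0 <= competition alpha x.
Proof.
  intros HH1.
  assert (Hc : forall x, continuity_pt (competition alpha) x)
    by (intro x; apply continuity_of_ex_derive, ex_derive_competition).
  destruct (continuity_ab_min _ 0 1 ltac:(lra) (fun x _ => Hc x)) as [m [Hm Hm01]].
  exists (competition alpha m). split; [apply competition_pos|]; auto.
Qed.

Lemma Fpolar_cubic beta delta alpha g rh c S KB KA K1 a0 :
  0 < g -> 0 < rh -> 0 < S <= 1 -> 0 <= a0 ->
  let x := (1 + c) / 2 in
  Rabs (netgrowth beta delta x) <= KB -> a0 <= competition alpha x <= KA ->
  Rabs (dselcomp alpha x) <= K1 ->
  g ^ 2 * a0 ^ 2 / 32 * rh ^ 3 - (KB ^ 2 / 4 + g * KA / 2 + g * K1 / 8) * rh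
  - Rabs (dselgrowth beta delta) / 4 <= Fpolar beta delta alpha g rh c S.
Proof.
  intros Hg Hr HS Ha0 x HB HA HK1.
  pose proof (Fpolar_lower beta delta alpha g rh c S Hr (proj1 HS)) as L.
  cbv zeta in L. fold x in L.
  set (B := netgrowth beta delta x) in *. set (A := competition alpha x) in *.
  set (d0 := dselgrowth beta delta) in *. set (d1 := dselcomp alpha x) in *.
  assert (Hsq : g ^ 2 * rh ^ 2 * a0 ^ 2 / 8 - KB ^ 2 <= (B - g * rh * A / 2) ^ 2).
  { apply Rabs_le_between in HB.
    set (v := g * rh * A / 2). set (w := g * rh * a0 / 2).
    assert (Hw : 0 <= w <= v).
    { split; [|apply Rmult_le_compat_r; [lra|apply Rmult_le_compat_l; nra]].
      apply Rmult_le_pos; [|lra]. apply Rmult_le_pos; nra. }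
    assert (B ^ 2 <= KB ^ 2) by nra.
    assert (w ^ 2 <= v ^ 2) by nra.
    assert (0 <= 2 * (B - v / 2) ^ 2) by (pose proof (pow2_ge_0 (B - v / 2)); lra).
    replace (g ^ 2 * rh ^ 2 * a0 ^ 2 / 8) with (w ^ 2 / 2) by (unfold w; field).
    nra. }
  assert (Hcomp : g * rh * A / 2 <= g * rh * KA / 2)
    by (apply Rmult_le_compat_r; [lra|apply Rmult_le_compat_l; nra]).
  assert (Hsel : - (Rabs d0 + g * rh / 2 * K1) <= S ^ 2 * (d0 - g * rh / 2 * d1)).
  { pose proof (Rabs_maj2 d0). apply Rabs_le_between in HK1.
    assert (0 <= g * rh / 2) by (apply Rdiv_le_0_compat; nra).
    assert (Rabs (d0 - g * rh / 2 * d1) <= Rabs d0 + g * rh / 2 * K1).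
    { eapply Rle_trans; [apply Rabs_triang|]. rewrite Rabs_Ropp, Rabs_mult.
      rewrite (Rabs_pos_eq (g * rh / 2)) by assumption.
      apply Rplus_le_compat_l, Rmult_le_compat_l; [assumption|]. apply Rabs_le. lra. }
    apply Rabs_le_between in H1. assert (0 <= S ^ 2 <= 1) by nra. nra. }
  assert (Hrsq : rh * (g ^ 2 * rh ^ 2 * a0 ^ 2 / 8 - KB ^ 2) / 4
                 <= rh * (B - g * rh * A / 2) ^ 2 / 4) by (unfold Rdiv; nra).
  lra.
Qed.

Lemma cubic_coercive c3 c1 c0 M : 0 < c3 -> 0 <= c1 -> 0 <= c0 ->
  exists T, 1 <= T /\ forall r, T <= r -> M <= c3 * r ^ 3 - c1 * r - c0.
Proof.
  intros H3 H1 H0.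
  set (K := c1 + c0 + Rabs M).
  assert (HK : 0 <= K) by (pose proof (Rabs_pos M); unfold K; lra).
  exists (1 + K / c3). split; [assert (0 <= K / c3) by (apply Rdiv_le_0_compat; lra); lra|].
  intros r Hr.
  assert (HcT : c3 * (1 + K / c3) = c3 + K) by (field; lra).
  assert (Hr1 : 1 <= r) by (assert (0 <= K / c3) by (apply Rdiv_le_0_compat; lra); lra).
  assert (c3 * (1 + K / c3) <= c3 * r ^ 2) by (apply Rmult_le_compat_l; nra).
  assert (K * r <= c3 * r ^ 3) by nra.
  assert (c0 + Rabs M <= (c0 + Rabs M) * r) by (pose proof (Rabs_pos M); nra).
  pose proof (Rle_abs M). unfold K in *. nra.
Qed.

Lemma cubic_bounded_below c3 c1 c0 : 0 < c3 -> 0 <= c1 -> 0 <= c0 ->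
  exists C, forall r, 0 <= r -> C <= c3 * r ^ 3 - c1 * r - c0.
Proof.
  intros H3 H1 H0. destruct (cubic_coercive c3 c1 c0 0 H3 H1 H0) as [T [HT1 HT]].
  exists (- c1 * T - c0). intros r Hr.
  destruct (Rle_or_lt T r) as [HTr|HrT].
  - specialize (HT r HTr). nra.
  - assert (0 <= c3 * r ^ 3) by (apply Rmult_le_pos; [lra|apply pow_le, Hr]). nra.
Qed.

Lemma F_cubic_bound g beta delta alpha Q : 0 < g -> H1 alpha ->
  (forall s1 s2 : R, D_int s1 s2 ->
     derivable_pt_lim (fun t => Q t s2) s1 (q1 g beta delta alpha s1 s2) /\
     derivable_pt_lim (fun t => Q s1 t) s2 (q2 g beta delta alpha s1 s2)) ->
  exists c3 c1 c0, 0 < c3 /\ 0 <= c1 /\ 0 <= c0 /\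
    forall s1 s2, D_int s1 s2 -> c3 * rho s1 s2 ^ 3 - c1 * rho s1 s2 - c0 <= Ffun Q s1 s2.
Proof.
  intros Hg HH1 HQ.
  destruct (competition_min alpha HH1) as [a0 [Ha0 Hmin]].
  destruct (bounded_on_unit (netgrowth beta delta) (ex_derive_netgrowth beta delta))
    as [KB HKB].
  destruct (bounded_on_unit (competition alpha) (ex_derive_competition alpha)) as [KA HKA].
  destruct (bounded_on_unit (dselcomp alpha) (ex_derive_dselcomp alpha)) as [K1 HK1].
  assert (0 <= KB) by (eapply Rle_trans; [apply Rabs_pos|apply (HKB 0)]; lra).
  assert (0 <= KA) by (eapply Rle_trans; [apply Rabs_pos|apply (HKA 0)]; lra).
  assert (0 <= K1) by (eapply Rle_trans; [apply Rabs_pos|apply (HK1 0)]; lra).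
  exists (g ^ 2 * a0 ^ 2 / 32), (KB ^ 2 / 4 + g * KA / 2 + g * K1 / 8),
    (Rabs (dselgrowth beta delta) / 4).
  split; [apply Rdiv_lt_0_compat; [apply Rmult_lt_0_compat; apply pow_lt|]; lra|].
  split; [pose proof (pow2_ge_0 KB); apply Rplus_le_le_0_compat; [|unfold Rdiv]; nra|].
  split; [pose proof (Rabs_pos (dselgrowth beta delta)); lra|].
  intros s1 s2 HD.
  rewrite (F_polar g beta delta alpha Q Hg HQ s1 s2 HD).
  pose proof (preimage_x_bound s1 s2 HD) as Hx.
  assert (Hx' : 0 <= (1 + cos (phase s1 s2)) / 2 <= 1) by lra.
  apply Fpolar_cubic.
  - exact Hg.
  - apply rho_pos, HD.
  - split; [apply sin_phase_pos, HD|apply SIN_bound].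
  - lra.
  - apply HKB, Hx'.
  - split; [apply Hmin, Hx'|]. eapply Rle_trans; [apply Rle_abs|apply HKA, Hx'].
  - apply HK1, Hx'.
Qed.

Theorem mainTheorem14
  (gamma : R) (beta delta : nat -> R) (alpha : nat -> nat -> R)
  (Hgamma : 0 < gamma) (HH1 : H1 alpha) (Hsym : alpha_symmetric alpha)
  (Q : R -> R -> R)
  (HQ : forall s1 s2 : R, D_int s1 s2 ->
          derivable_pt_lim (fun t => Q t s2) s1 (q1 gamma beta delta alpha s1 s2) /\
          derivable_pt_lim (fun t => Q s1 t) s2 (q2 gamma beta delta alpha s1 s2)) :
  (exists C : R, forall s1 s2 : R, D_int s1 s2 -> C <= Ffun Q s1 s2) /\
  (forall M : R, exists R0 : R, forall s1 s2 : R,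
      D_int s1 s2 -> R0 <= sqrt (s1 ^ 2 + s2 ^ 2) -> M <= Ffun Q s1 s2).
Proof.
  destruct (F_cubic_bound gamma beta delta alpha Q Hgamma HH1 HQ)
    as (c3 & c1 & c0 & H3 & H1' & H0 & HF).
  split.
  - destruct (cubic_bounded_below c3 c1 c0 H3 H1' H0) as [C HC].
    exists C. intros s1 s2 HD.
    eapply Rle_trans; [apply HC, Rlt_le, rho_pos, HD|apply HF, HD].
  - intros M. destruct (cubic_coercive c3 c1 c0 M H3 H1' H0) as [T [HT1 HT]].
    exists T. intros s1 s2 HD HR.
    eapply Rle_trans; [apply HT|apply HF, HD].
    (* |s| >= T >= 1 forces |s|^2 >= T *)
    pose proof (sqrt_rho_sq s1 s2 HD). change (T <= sqrt (rho s1 s2)) in HR. nra.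
Qed.
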